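(* Let $(\mathfrak{g},f)$ be a factorizable Lie bialgebra. Put $\mathfrak{c}_1=\operatorname{Im}(f-1)$; then $\mathfrak{c}_1^\perp=\operatorname{Ker}f$, and $f$ induces an endomorphism $\tilde f$ of $\mathfrak{c}_1/\mathfrak{c}_1^\perp$ making $(\mathfrak{c}_1/\mathfrak{c}_1^\perp,\tilde f)$ a factorizable Lie bialgebra (with the form induced by $\kappa$). The map $\mathfrak{g}_f^{cop}\to\mathfrak{c}_1/\mathfrak{c}_1^\perp$, $x\mapsto (f-1)(x)+\mathfrak{c}_1^\perp$, is a surjective homomorphism of Lie bialgebras, with kernel $\operatorname{Ker}f+\operatorname{Ker}(f-1)$.
   Context: Let $\mathfrak{g}$ be a finite-dimensional complex Lie algebra with a nondegenerate invariant symmetric bilinear form $\kappa$; $\perp$ and adjoints $f^*$ are taken with respect to $\kappa$. A factorizable Lie bialgebra $(\mathfrak{g},f)$ is given by $f\in\operatorname{End}\mathfrak{g}$ with (i) $f+f^*=1$ and (ii) $[f(x),f(y)]=f([x,f(y)]+[f(x),y]-[x,y])$ for all $x,y$; its cobracket is $\delta(x)=[x\otimes1+1\otimes x,r]$ where $r=\sum_a x_a\otimes f(x^a)$ for any pair of $\kappa$-dual bases $(x_a),(x^a)$. $\mathfrak{g}_f$ denotes the dual Lie bialgebra $\mathfrak{g}^*$ transported to $\mathfrak{g}$ via $\kappa$: as a Lie algebra it is $\mathfrak{g}$ with bracket $[x,y]_f=[x,f(y)]+[f(x),y]-[x,y]$, and its cobracket is the transpose (via $\kappa$) of the bracket of $\mathfrak{g}$.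 For a Lie bialgebra $\mathfrak{l}$, $\mathfrak{l}^{cop}$ is $\mathfrak{l}$ with the same bracket and the negated cobracket. *)

(* Finite-dimensional complex vector spaces are modelled as
   [vectType C] with C := R[i], R : realType (so C is the field of complex
   numbers). *)
From HB Require Import structures.
From mathcomp Require Import all_boot all_order all_algebra.
From mathcomp Require Export reals.
From mathcomp Require Export complex.
Set Implicit Arguments.
Unset Strict Implicit.
Unset Printing Implicit Defensive.
Import GRing.Theory.
Local Open Scope ring_scope.

Section LieDefs.
Variables (K : fieldType) (V : vectType K).

Definition lie_bracket (br : V -> V -> V) : Prop :=
  [/\ (forall a x y z, br (a *: x + y) z = a *: br x z + br y z),
      (forall a x y z, br x (a *: y + z) = a *: br x y + br x z),
      (forall x, br x x = 0) &
      (forall x y z, br x (br y z) + br y (br z x) + br z (br x y) = 0)].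

Definition nondeg_inv_sym_form (br : V -> V -> V) (k : V -> V -> K) : Prop :=
  [/\ (forall a x y z, k (a *: x + y) z = a * k x z + k y z),
      (forall a x y z, k x (a *: y + z) = a * k x y + k x z),
      (forall x y, k x y = k y x),
      (forall x, (forall y, k x y = 0) -> x = 0) &
      (forall x y z, k (br x y) z = k x (br y z))].

Definition is_adjoint (k : V -> V -> K) (f g : 'End(V)) : Prop :=
  forall x y, k (f x) y = k x (g y).

Definition factorizable (br : V -> V -> V) (k : V -> V -> K) (f : 'End(V)) : Prop :=
  [/\ lie_bracket br,
      nondeg_inv_sym_form br k,
      (exists fs : 'End(V), is_adjoint k f fs /\ f + fs = \1%VF) &
      (forall x y, br (f x) (f y) = f (br x (f y) + br (f x) y - br x y))].

Definition fbracket (br : V -> V -> V) (f : 'End(V)) (x y : V) : V :=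
  br x (f y) + br (f x) y - br x y.

Definition orthogonal_to (k : V -> V -> K) (U : {vspace V}) (y : V) : Prop :=
  forall x, x \in U -> k x y = 0.

(* Dual space V^* and 2-tensors: V (x) V is identified (canonically, V being
   finite-dimensional) with the bilinear maps V^* x V^* -> K; the elementary
   tensor a (x) b is  fun xi eta => xi a * eta b. *)
Definition dual := 'Hom(V, K^o).
Definition tensor2 := dual -> dual -> K.

Definition dual_bases (k : V -> V -> K) (e e' : seq V) : Prop :=
  [/\ basis_of fullv e, basis_of fullv e', size e' = size e &
      forall i j, (i < size e)%N -> (j < size e)%N ->
        k e`_i e'`_j = (i == j)%:R].

(* Cobracket of the factorizable Lie bialgebra:
   delta(x) = [x (x) 1 + 1 (x) x, r],  r = sum_a x_a (x) f(x^a),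
   i.e. delta(x) = sum_a [x,x_a] (x) f(x^a) + x_a (x) [x, f(x^a)]. *)
Definition fact_cobracket (br : V -> V -> V) (f : 'End(V)) (e e' : seq V)
    (x : V) : tensor2 :=
  fun xi eta => \sum_(i < size e)
    (xi (br x e`_i) * eta (f e'`_i) + xi e`_i * eta (br x (f e'`_i))).

(* Cobracket of g_f: the transpose (via k) of the bracket of g, i.e. the
   unique delta_f(x) with (k (x) k)(delta_f(x), y (x) z) = k(x, [y,z]);
   in dual bases: delta_f(x) = sum_{a,b} k(x,[x^a,x^b]) x_a (x) x_b. *)
Definition transp_cobracket (br : V -> V -> V) (k : V -> V -> K) (e e' : seq V)
    (x : V) : tensor2 :=
  fun xi eta => \sum_(i < size e) \sum_(j < size e)
    k x (br e'`_i e'`_j) * (xi e`_i * eta e`_j).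

End LieDefs.

Section HomDefs.
Variables (K : fieldType) (V W : vectType K).

Definition lie_bialg_hom (brV : V -> V -> V) (cobV : V -> tensor2 V)
    (brW : W -> W -> W) (cobW : W -> tensor2 W) (phi : 'Hom(V, W)) : Prop :=
  (forall x y, phi (brV x y) = brW (phi x) (phi y)) /\
  (forall x (xi eta : dual W),
      cobW (phi x) xi eta = cobV x (xi \o phi)%VF (eta \o phi)%VF).

End HomDefs.

(** Since [f^* = 1 - f], the form satisfies [k ((f - 1) z) y = - k z (f y)], so
    [c1^perp = Ker f].  The factorizability identity gives
    [[(f - 1) x, (f - 1) y] = (f - 1) [x, y]_f]: thus [c1] is a subalgebra and
    [f - 1 : g_f -> c1] a Lie algebra map.  By invariance of [k], [c1 :&: c1^perp]
    is an ideal of [c1] on which [f] vanishes, so bracket, form and [f] descend to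
    the quotient; they are computed through the section [s = (f - 1) (pi (f - 1))^-1].
    Both cobrackets, evaluated on the functionals [k p] and [k q], reduce to forms:
    [delta_f] gives [k x [p, q]] and [delta] gives [k z [p, q]_f]; pulling [kQ p]
    back along [pi (f - 1)] gives [k (- f (s p))], which matches them. *)
From HB Require Import structures.
From mathcomp Require Import all_boot all_order all_algebra.
From mathcomp Require Import reals complex.
From mathcomp Require Import ring.
Set Implicit Arguments.
Unset Strict Implicit.
Unset Printing Implicit Defensive.
Import GRing.Theory.
Local Open Scope ring_scope.

Section SymmetricBilinearForm.
Variables (K : fieldType) (W : vectType K) (b : W -> W -> K).
Hypothesis bP : forall a x y z, b (a *: x + y) z = a * b x z + b y z.
Hypothesis bC : forall x y, b x y = b y x.

Lemma form0l w : b 0 w = 0.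
Proof.
have := bP 1 0 0 w; rewrite scaler0 addr0 mul1r => b00.
by apply: (addrI (b 0 w)); rewrite addr0 -b00.
Qed.

Lemma formDl x y w : b (x + y) w = b x w + b y w.
Proof. by rewrite -[x]scale1r bP mul1r scale1r. Qed.

Lemma formZl a x w : b (a *: x) w = a * b x w.
Proof. by rewrite -[a *: x]addr0 bP form0l addr0. Qed.

Lemma formNl x w : b (- x) w = - b x w.
Proof. by rewrite -scaleN1r formZl mulN1r. Qed.

Lemma formBl x y w : b (x - y) w = b x w - b y w.
Proof. by rewrite formDl formNl. Qed.

Lemma form0r w : b w 0 = 0. Proof. by rewrite bC form0l. Qed.

Lemma formDr x y w : b w (x + y) = b w x + b w y.
Proof. by rewrite !(bC w) formDl. Qed.

Lemma formZr a x w : b w (a *: x) = a * b w x.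
Proof. by rewrite !(bC w) formZl. Qed.

Lemma formNr x w : b w (- x) = - b w x.
Proof. by rewrite !(bC w) formNl. Qed.

Lemma formBr x y w : b w (x - y) = b w x - b w y.
Proof. by rewrite !(bC w) formBl. Qed.

Lemma form_suml I (r : seq I) (P : pred I) (F : I -> W) w :
  b (\sum_(i <- r | P i) F i) w = \sum_(i <- r | P i) b (F i) w.
Proof. exact: (big_morph (b^~ w) (fun x y => formDl x y w) (form0l w)). Qed.

Lemma form_sumr I (r : seq I) (P : pred I) (F : I -> W) w :
  b w (\sum_(i <- r | P i) F i) = \sum_(i <- r | P i) b w (F i).
Proof. by rewrite bC form_suml; apply: eq_bigr => i _; rewrite bC. Qed.

Variables (e e' : seq W).
Hypothesis ee' : dual_bases b e e'.

Lemma dual_basis_expansion a : a = \sum_(i < size e) b e`_i a *: e'`_i.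
Proof.
case: ee' => _ /andP[/eqP span_e' _] size_e' be.
have a_span : a \in span (in_tuple e') by rewrite /= span_e' memvf.
rewrite -size_e' {1}(coord_span a_span); apply: eq_bigr => i _; congr (_ *: _).
have be' (i1 j1 : 'I_(size e')) : b e`_i1 e'`_j1 = (val i1 == val j1)%:R.
  by apply: be; rewrite -size_e' ltn_ord.
rewrite {2}(coord_span a_span) form_sumr (bigD1 i) //= formZr be' eqxx mulr1.
rewrite big1 ?addr0 // => j /negbTE ij.
by rewrite formZr be' (_ : (val i == val j) = false) ?mulr0 // eq_sym.
Qed.

Lemma form_dual_basis_expansion u v :
  b u v = \sum_(i < size e) b e`_i u * b e'`_i v.
Proof.
rewrite {1}(dual_basis_expansion u) form_suml.
by apply: eq_bigr => i _; rewrite formZl.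
Qed.

Lemma dual_form_repr (xi : dual W) w :
  xi w = b (\sum_(i < size e) xi e'`_i *: e`_i) w.
Proof.
rewrite {1}(dual_basis_expansion w) linear_sum form_suml.
by apply: eq_bigr => i _; rewrite linearZ formZl bC mulrC.
Qed.

End SymmetricBilinearForm.

Section LieBracket.
Variables (K : fieldType) (W : vectType K) (br : W -> W -> W).
Hypothesis brPl : forall a x y z, br (a *: x + y) z = a *: br x z + br y z.
Hypothesis brPr : forall a x y z, br x (a *: y + z) = a *: br x y + br x z.
Hypothesis br_alt : forall x, br x x = 0.

Lemma bracket0l w : br 0 w = 0.
Proof.
have := brPl 1 0 0 w; rewrite scaler0 addr0 scale1r => br00.
by apply: (addrI (br 0 w)); rewrite addr0 -br00.
Qed.

Lemma bracket0r w : br w 0 = 0.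
Proof.
have := brPr 1 w 0 0; rewrite scaler0 addr0 scale1r => br00.
by apply: (addrI (br w 0)); rewrite addr0 -br00.
Qed.

Lemma bracketDl x y w : br (x + y) w = br x w + br y w.
Proof. by rewrite -[x]scale1r brPl !scale1r. Qed.

Lemma bracketDr x y w : br w (x + y) = br w x + br w y.
Proof. by rewrite -[x]scale1r brPr !scale1r. Qed.

Lemma bracketZl a x w : br (a *: x) w = a *: br x w.
Proof. by rewrite -[a *: x]addr0 brPl bracket0l addr0. Qed.

Lemma bracketZr a x w : br w (a *: x) = a *: br w x.
Proof. by rewrite -[a *: x]addr0 brPr bracket0r addr0. Qed.

Lemma bracketNl x w : br (- x) w = - br x w.
Proof. by rewrite -scaleN1r bracketZl scaleN1r. Qed.

Lemma bracketNr x w : br w (- x) = - br w x.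
Proof. by rewrite -scaleN1r bracketZr scaleN1r. Qed.

Lemma bracketBl x y w : br (x - y) w = br x w - br y w.
Proof. by rewrite bracketDl bracketNl. Qed.

Lemma bracketBr x y w : br w (x - y) = br w x - br w y.
Proof. by rewrite bracketDr bracketNr. Qed.

Lemma bracketC x y : br x y = - br y x.
Proof.
have := br_alt (x + y).
rewrite bracketDl !bracketDr !br_alt add0r addr0 => /eqP.
by rewrite addr_eq0 => /eqP.
Qed.

Lemma bracket_suml I (r : seq I) (P : pred I) (F : I -> W) w :
  br (\sum_(i <- r | P i) F i) w = \sum_(i <- r | P i) br (F i) w.
Proof. exact: (big_morph (br^~ w) (fun x y => bracketDl x y w) (bracket0l w)). Qed.

Lemma bracket_sumr I (r : seq I) (P : pred I) (F : I -> W) w :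
  br w (\sum_(i <- r | P i) F i) = \sum_(i <- r | P i) br w (F i).
Proof. exact: (big_morph (br w) (fun x y => bracketDr x y w) (bracket0r w)). Qed.

End LieBracket.

Section Cobrackets.
Variables (K : fieldType) (W : vectType K) (br : W -> W -> W) (k : W -> W -> K).
Variables (f : 'End(W)) (e e' : seq W).
Hypothesis fact_f : factorizable br k f.
Hypothesis ee' : dual_bases k e e'.

Lemma factorizable_form_fl x y : k (f x) y = k x (y - f y).
Proof.
case: fact_f => _ _ [fs [f_fs f_fs1]] _.
have := congr1 (fun g : 'End(W) => g y) f_fs1.
by rewrite /= add_lfunE id_lfunE f_fs => fy; rewrite -{2}fy addrAC subrr add0r.
Qed.

Lemma fact_cobracket_form z (xi eta : dual W) p q :
  (forall w, xi w = k p w) -> (forall w, eta w = k q w) ->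
  fact_cobracket br f e e' z xi eta = k z (fbracket br f p q).
Proof.
case: fact_f => [[brPl brPr br_alt _] [kP _ kC _ k_inv] _ _] xiE etaE.
rewrite /fact_cobracket big_split /=.
have -> : \sum_(i < size e) xi (br z e`_i) * eta (f e'`_i) = k (br p z) (q - f q).
  rewrite (form_dual_basis_expansion kP kC ee'); apply: eq_bigr => i _.
  by rewrite xiE etaE -k_inv kC (kC q) factorizable_form_fl.
have -> : \sum_(i < size e) xi e`_i * eta (br z (f e'`_i))
    = k p (br q z - f (br q z)).
  rewrite (form_dual_basis_expansion kP kC ee'); apply: eq_bigr => i _.
  by rewrite xiE etaE -k_inv (kC (br q z)) factorizable_form_fl kC.
rewrite -(factorizable_form_fl p (br q z)) -k_inv (kC _ z) (formBr kP kC).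
rewrite (bracketC brPl brPr br_alt p z) !(formNl kP) !k_inv.
rewrite /fbracket !(formDr kP kC, formBr kP kC, formNr kP kC).
ring.
Qed.

Lemma transp_cobracket_form x (xi eta : dual W) p q :
  (forall w, xi w = k p w) -> (forall w, eta w = k q w) ->
  transp_cobracket br k e e' x xi eta = k x (br p q).
Proof.
case: fact_f => [[brPl brPr _ _] [kP _ kC _ _] _ _] xiE etaE.
rewrite [in RHS](dual_basis_expansion kP kC ee' p).
rewrite [in RHS](dual_basis_expansion kP kC ee' q).
rewrite (bracket_suml brPl) (form_sumr kP kC); apply: eq_bigr => i _.
rewrite (bracketZl brPl) (formZr kP kC) (bracket_sumr brPr) (form_sumr kP kC).
rewrite big_distrr /=; apply: eq_bigr => j _.
by rewrite (bracketZr brPr) !(formZr kP kC) xiE etaE (kC p) (kC q) /=; ring.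
Qed.

End Cobrackets.

Section FactorizableQuotient.
Variables (K : fieldType) (V : vectType K) (br : V -> V -> V) (k : V -> V -> K).
Variable f : 'End(V).
Hypothesis fact_f : factorizable br k f.

Local Notation f1 := (f - \1%VF).
Local Notation c1 := (limg (f - \1%VF)).

Let lie_br : lie_bracket br. Proof. by case: fact_f. Qed.
Let form_k : nondeg_inv_sym_form br k. Proof. by case: fact_f. Qed.
Let brPl := let: And4 P _ _ _ := lie_br in P.
Let brPr := let: And4 _ P _ _ := lie_br in P.
Let br_alt := let: And4 _ _ P _ := lie_br in P.
Let br_jacobi := let: And4 _ _ _ P := lie_br in P.
Let kP := let: And5 P _ _ _ _ := form_k in P.
Let kC := let: And5 _ _ P _ _ := form_k in P.
Let k_nondeg := let: And5 _ _ _ P _ := form_k in P.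
Let k_inv := let: And5 _ _ _ _ P := form_k in P.
Let f_fact : forall x y, br (f x) (f y) = f (fbracket br f x y).
Proof. by case: fact_f. Qed.

Lemma sub1_lfunE x : f1 x = f x - x.
Proof. by rewrite add_lfunE opp_lfunE id_lfunE. Qed.

Lemma form_sub1l z y : k (f1 z) y = - k z (f y).
Proof.
by rewrite sub1_lfunE (formBl kP) (factorizable_form_fl fact_f) (formBr kP kC); ring.
Qed.

Lemma sub1_in_c1 z : f1 z \in c1.
Proof. exact: memv_img (memvf z). Qed.

Lemma orthogonal_c1P y : orthogonal_to k c1 y <-> f y = 0.
Proof.
split=> [ortho_y | fy0 x /memv_imgP [u _ ->]].
  apply: k_nondeg => z; rewrite kC.
  have /eqP := ortho_y (f1 z) (sub1_in_c1 z).
  by rewrite form_sub1l oppr_eq0 => /eqP.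
by rewrite form_sub1l fy0 (form0r kP kC) oppr0.
Qed.

Lemma c1_stable_f x : x \in c1 -> f x \in c1.
Proof.
case/memv_imgP => u _ ->.
by rewrite (_ : f (f1 u) = f1 (f u)) ?sub1_in_c1 // !sub1_lfunE linearB.
Qed.

Lemma bracket_sub1 x y : br (f1 x) (f1 y) = f1 (fbracket br f x y).
Proof.
rewrite !sub1_lfunE /fbracket -f_fact (bracketBl brPl) !(bracketBr brPr).
rewrite !opprB opprD -!addrA; congr (_ + _).
by rewrite addrCA; congr (_ + _); rewrite addrC.
Qed.

Lemma c1_bracket_closed x y : x \in c1 -> y \in c1 -> br x y \in c1.
Proof.
by case/memv_imgP => u _ -> /memv_imgP [v _ ->]; rewrite bracket_sub1 sub1_in_c1.
Qed.

Section Quotient.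
Variables (Q : vectType K) (pi : 'Hom(V, Q)).
Hypothesis pi_onto : (pi @: c1)%VS = fullv.
Hypothesis ker_pi : forall x, x \in c1 -> (pi x = 0 <-> orthogonal_to k c1 x).

Local Notation phi := (pi \o (f - \1%VF))%VF.

Lemma limg_phi : limg phi = fullv.
Proof. by rewrite limg_comp pi_onto. Qed.

Definition quot_section : 'Hom(Q, V) := (f1 \o phi^-1)%VF.
Local Notation s := quot_section.

Lemma pi_quot_section q : pi (s q) = q.
Proof. by rewrite comp_lfunE -(comp_lfunE pi f1) limg_lfunVK // limg_phi memvf. Qed.

Lemma quot_section_in_c1 q : s q \in c1.
Proof. by rewrite comp_lfunE sub1_in_c1. Qed.

Lemma c1_pi_eq0 n : n \in c1 -> (pi n = 0 <-> f n = 0).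
Proof. by move=> n_c1; rewrite (ker_pi n_c1) orthogonal_c1P. Qed.

Lemma ker_pi_ideal n c : n \in c1 -> pi n = 0 -> c \in c1 -> pi (br n c) = 0.
Proof.
move=> n_c1 pin c_c1; apply/(ker_pi (c1_bracket_closed n_c1 c_c1)) => c' c'_c1.
by rewrite kC k_inv kC (proj1 (ker_pi n_c1) pin) // c1_bracket_closed.
Qed.

Lemma quot_section_piE x : x \in c1 ->
  exists n, [/\ n \in c1, pi n = 0 & s (pi x) = x + n].
Proof.
move=> x_c1; exists (s (pi x) - x); split; last by rewrite addrC subrK.
  by rewrite memvB ?quot_section_in_c1.
by rewrite linearB /= pi_quot_section subrr.
Qed.

Lemma pi_bracket_section x y : x \in c1 -> y \in c1 ->
  pi (br (s (pi x)) (s (pi y))) = pi (br x y).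
Proof.
move=> x_c1 y_c1; have [n [n_c1 pin ->]] := quot_section_piE x_c1.
have [m [m_c1 pim ->]] := quot_section_piE y_c1.
rewrite (bracketDl brPl) linearD /= (ker_pi_ideal n_c1 pin) ?memvD // addr0.
rewrite (bracketDr brPr) linearD /= (bracketC brPl brPr br_alt x m) linearN /=.
by rewrite (ker_pi_ideal m_c1 pim) // oppr0 addr0.
Qed.

Lemma form_quot_section_pi x c : x \in c1 -> c \in c1 -> k (s (pi x)) c = k x c.
Proof.
move=> x_c1 c_c1; have [n [n_c1 pin ->]] := quot_section_piE x_c1.
by rewrite (formDl kP) (kC n) (proj1 (ker_pi n_c1) pin c c_c1) addr0.
Qed.

Lemma f_quot_section_pi x : x \in c1 -> f (s (pi x)) = f x.
Proof.
move=> x_c1; have [n [n_c1 pin ->]] := quot_section_piE x_c1.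
by rewrite linearD /= (proj1 (c1_pi_eq0 n_c1) pin) addr0.
Qed.

Definition quot_bracket p q := pi (br (s p) (s q)).
Definition quot_form p q := k (s p) (s q).
Definition quot_endo : 'End(Q) := (pi \o f \o s)%VF.
Local Notation brQ := quot_bracket.
Local Notation kQ := quot_form.
Local Notation ft := quot_endo.

Lemma quot_endoE p : ft p = pi (f (s p)).
Proof. by rewrite !comp_lfunE. Qed.

Lemma pi_bracket x y : x \in c1 -> y \in c1 -> pi (br x y) = brQ (pi x) (pi y).
Proof. by move=> x_c1 y_c1; rewrite /quot_bracket pi_bracket_section. Qed.

Lemma quot_form_pi x y : x \in c1 -> y \in c1 -> kQ (pi x) (pi y) = k x y.
Proof.
move=> x_c1 y_c1; rewrite /quot_form form_quot_section_pi ?quot_section_in_c1 //.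
by rewrite kC form_quot_section_pi // kC.
Qed.

Lemma quot_endo_pi x : x \in c1 -> ft (pi x) = pi (f x).
Proof. by move=> x_c1; rewrite quot_endoE f_quot_section_pi. Qed.

Lemma quot_bracket_pir p x : x \in c1 -> brQ p (pi x) = pi (br (s p) x).
Proof. by move=> x_c1; rewrite pi_bracket ?quot_section_in_c1 // pi_quot_section. Qed.

Lemma quot_bracket_pil p x : x \in c1 -> brQ (pi x) p = pi (br x (s p)).
Proof. by move=> x_c1; rewrite pi_bracket ?quot_section_in_c1 // pi_quot_section. Qed.

Lemma quot_fbracket p q : fbracket brQ ft p q = pi (fbracket br f (s p) (s q)).
Proof.
rewrite /fbracket !quot_endoE.
rewrite quot_bracket_pir ?quot_bracket_pil ?c1_stable_f ?quot_section_in_c1 //.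
by rewrite /quot_bracket -linearD /= -linearB /=.
Qed.

Lemma fbracket_in_c1 x y : x \in c1 -> y \in c1 -> fbracket br f x y \in c1.
Proof. by move=> x_c1 y_c1; rewrite memvB ?memvD ?c1_bracket_closed ?c1_stable_f. Qed.

Lemma quot_lie_bracket : lie_bracket brQ.
Proof.
split.
- by move=> a x y z; rewrite /quot_bracket linearP /= brPl linearP /=.
- by move=> a x y z; rewrite /quot_bracket linearP /= brPr linearP /=.
- by move=> x; rewrite /quot_bracket br_alt linear0 /=.
move=> x y z; rewrite [brQ y z]/brQ [brQ z x]/brQ [brQ x y]/brQ.
rewrite !quot_bracket_pir ?c1_bracket_closed ?quot_section_in_c1 //.
by rewrite -!linearD /= br_jacobi linear0 /=.
Qed.

Lemma quot_nondeg_inv_sym_form : nondeg_inv_sym_form brQ kQ.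
Proof.
split.
- by move=> a x y z; rewrite /quot_form linearP /= kP.
- by move=> a x y z; rewrite /quot_form linearP /= (formDr kP kC) (formZr kP kC).
- by move=> x y; rewrite /quot_form kC.
- move=> p kp0; rewrite -(pi_quot_section p).
  apply/(c1_pi_eq0 (quot_section_in_c1 p))/orthogonal_c1P => c c_c1.
  by rewrite -(form_quot_section_pi c_c1 (quot_section_in_c1 p)) kC; apply: kp0.
move=> x y z; rewrite /quot_form /quot_bracket.
rewrite form_quot_section_pi ?c1_bracket_closed ?quot_section_in_c1 // k_inv.
by rewrite [RHS]kC form_quot_section_pi ?c1_bracket_closed ?quot_section_in_c1 // kC.
Qed.

Lemma quot_form_endol p q : kQ (ft p) q = kQ p (q - ft q).
Proof.
rewrite /quot_form quot_endoE form_quot_section_pi ?c1_stable_f ?quot_section_in_c1 //.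
rewrite (factorizable_form_fl fact_f) linearB /= quot_endoE !(formBr kP kC).
rewrite [k (s p) (s (pi _))]kC form_quot_section_pi ?c1_stable_f ?quot_section_in_c1 //.
by rewrite [k (f _) _]kC.
Qed.

Lemma quot_factorizable : factorizable brQ kQ ft.
Proof.
split; [exact: quot_lie_bracket | exact: quot_nondeg_inv_sym_form | |].
- exists (\1 - ft)%VF; split=> [p q | ]; last by rewrite addrC subrK.
  by rewrite quot_form_endol add_lfunE opp_lfunE id_lfunE.
- move=> p q; rewrite -/(fbracket brQ ft p q) quot_fbracket.
  rewrite quot_endo_pi ?fbracket_in_c1 ?quot_section_in_c1 //.
  by rewrite !quot_endoE -pi_bracket ?c1_stable_f ?quot_section_in_c1 // f_fact.
Qed.

Lemma lker_phi : lker phi = (lker f + lker f1)%VS.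
Proof.
apply/vspaceP => x; apply/idP/idP.
- rewrite memv_ker comp_lfunE => /eqP /(c1_pi_eq0 (sub1_in_c1 x)).
  rewrite sub1_lfunE linearB /= => ffx.
  apply/memv_addP; exists (x - f x).
    by rewrite memv_ker linearB /= -opprB ffx oppr0.
  by exists (f x); rewrite ?subrK // memv_ker sub1_lfunE ffx.
- case/memv_addP => a + [b + ->]; rewrite !memv_ker => /eqP fa /eqP f1b.
  rewrite comp_lfunE linearD /= f1b addr0; apply/eqP.
  apply/(c1_pi_eq0 (sub1_in_c1 a)).
  by rewrite sub1_lfunE linearB /= fa linear0 /= subr0.
Qed.

Lemma phi_pullback_form (eQ eQ' : seq Q) (xi : dual Q) w :
  dual_bases kQ eQ eQ' ->
  (xi \o phi)%VF w = k (- f (s (\sum_(i < size eQ) xi eQ'`_i *: eQ`_i))) w.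
Proof.
have [_ [kQP _ kQC _ _] _ _] := quot_factorizable.
move=> eQQ'; rewrite comp_lfunE (dual_form_repr kQP kQC eQQ' xi) /quot_form.
rewrite [phi w]comp_lfunE [k _ (s (pi _))]kC.
rewrite form_quot_section_pi ?sub1_in_c1 ?quot_section_in_c1 //.
by rewrite form_sub1l (formNl kP) kC.
Qed.

Lemma phi_lie_bialg_hom (e e' : seq V) (eQ eQ' : seq Q) :
  dual_bases k e e' -> dual_bases kQ eQ eQ' ->
  lie_bialg_hom (fbracket br f)
    (fun x xi eta => - transp_cobracket br k e e' x xi eta)
    brQ (fact_cobracket brQ ft eQ eQ') phi.
Proof.
have [_ [kQP _ kQC _ _] _ _] := quot_factorizable.
move=> ee' eQQ'; split=> [x y | x xi eta].
  by rewrite !comp_lfunE -bracket_sub1 pi_bracket ?sub1_in_c1.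
rewrite (fact_cobracket_form quot_factorizable eQQ' _
  (dual_form_repr kQP kQC eQQ' xi) (dual_form_repr kQP kQC eQQ' eta)).
rewrite (transp_cobracket_form fact_f ee' _
  (fun w => phi_pullback_form xi w eQQ') (fun w => phi_pullback_form eta w eQQ')).
rewrite quot_fbracket comp_lfunE.
rewrite quot_form_pi ?sub1_in_c1 ?fbracket_in_c1 ?quot_section_in_c1 //.
by rewrite form_sub1l /fbracket -f_fact (bracketNl brPl) (bracketNr brPr) opprK.
Qed.

End Quotient.
End FactorizableQuotient.

Theorem mainTheorem16 (R : realType) (V : vectType R[i])
    (br : V -> V -> V) (k : V -> V -> R[i]) (f : 'End(V)) :
  factorizable br k f ->
  (forall y, orthogonal_to k (limg (f - \1%VF)) y <-> y \in lker f) /\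
  (forall (Q : vectType R[i]) (pi : 'Hom(V, Q)),
    (pi @: limg (f - \1%VF))%VS = fullv ->
    (forall x, x \in limg (f - \1%VF) ->
       (pi x = 0 <-> orthogonal_to k (limg (f - \1%VF)) x)) ->
    exists (brQ : Q -> Q -> Q) (kQ : Q -> Q -> R[i]) (ft : 'End(Q)),
      [/\ (forall x y, x \in limg (f - \1%VF) -> y \in limg (f - \1%VF) ->
             pi (br x y) = brQ (pi x) (pi y)),
          (forall x y, x \in limg (f - \1%VF) -> y \in limg (f - \1%VF) ->
             kQ (pi x) (pi y) = k x y),
          (forall x, x \in limg (f - \1%VF) -> ft (pi x) = pi (f x)),
          factorizable brQ kQ ft &
          [/\ limg (pi \o (f - \1%VF))%VF = fullv,
              lker (pi \o (f - \1%VF))%VF = (lker f + lker (f - \1%VF))%VS &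
              forall (e e' : seq V) (eQ eQ' : seq Q),
                dual_bases k e e' -> dual_bases kQ eQ eQ' ->
                lie_bialg_hom (fbracket br f)
                  (fun x xi eta => - transp_cobracket br k e e' x xi eta)
                  brQ (fact_cobracket brQ ft eQ eQ')
                  (pi \o (f - \1%VF))%VF]]).
Proof.
move=> fact_f; split=> [y | Q pi pi_onto ker_pi].
  by rewrite (orthogonal_c1P fact_f) memv_ker; split=> [-> | /eqP].
exists (quot_bracket br f pi), (quot_form k f pi), (quot_endo f pi); split.
- exact: (pi_bracket fact_f pi_onto ker_pi).
- exact: (quot_form_pi fact_f pi_onto ker_pi).
- exact: (quot_endo_pi fact_f pi_onto ker_pi).
- exact: (quot_factorizable fact_f pi_onto ker_pi).
split; first exact: (limg_phi pi_onto).
  exact: (lker_phi fact_f ker_pi).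
exact: (phi_lie_bialg_hom fact_f pi_onto ker_pi).
Qed.
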